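(* Let $T$ be a tree on $n$ vertices rooted at a vertex $v$. Then there exists a unique $n$-tuple $(F_1,\dots,F_n)$ of symmetric functions in the indeterminates $x_1,x_2,\dots$ such that for every positive integer $c$, $$Z_T(c)=\sum_{i=1}^n x_c^i F_i.$$
   Context: For a graph $G$, a proper coloring is a map $\kappa: V(G)\to\mathbb{N}=\{1,2,\dots\}$ with $\kappa(u)\neq\kappa(w)$ whenever $uw\in E(G)$. With commuting indeterminates $x_1,x_2,\dots$, for a vertex $v$ and color $c\in\mathbb{N}$, $Z_G^v(c)=\sum_{\kappa}\prod_{u\in V(G)}x_{\kappa(u)}$, summed over all proper colorings $\kappa$ of $G$ with $\kappa(v)=c$. For a tree $T$ rooted at $v$, $Z_T(c)$ denotes $Z_T^v(c)$. *)

From HB Require Import structures.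
From mathcomp Require Import all_boot all_order all_algebra.
From mathcomp Require Import finmap.
Set Implicit Arguments. Unset Strict Implicit. Unset Printing Implicit Defensive.
Import GRing.Theory Num.Theory.
Local Open Scope ring_scope.

(* Formal power series in countably many commuting indeterminates
   x_0, x_1, x_2, ... (x_j here stands for x_{j+1} of the paper),
   with integer coefficients.  A monomial is a finitely supported
   exponent function nat -> nat; a series is its coefficient map. *)
Definition monomial := {fsfun nat -> nat with 0%N}.
Definition series := monomial -> int.

Definition mdeg (m : monomial) : nat := (\sum_(j <- finsupp m) m j)%N.

Definition is_symmetric (f : series) : Prop :=
  (exists d : nat, forall m : monomial, f m != 0 -> (mdeg m <= d)%N) /\
  (forall s : nat -> nat, bijective s ->
     forall m m' : monomial, (forall j, m' j = m (s j)) -> f m' = f m).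

Definition mlower (c k : nat) (m : monomial) : monomial :=
  [fsfun j in finsupp m => if j == c then (m j - k)%N else m j | 0%N].

Definition mulXpow (c k : nat) (f : series) : series :=
  fun m => if (k <= m c)%N then f (mlower c k m) else 0.

Definition simple_graph (V : finType) (e : rel V) : Prop :=
  symmetric e /\ irreflexive e.

Definition is_tree (V : finType) (e : rel V) : Prop :=
  (forall u w : V, connect e u w) /\
  (forall s : seq V, uniq s -> (2 < size s)%N -> ~~ cycle e s).

(* Z_G^v(c): the coefficient of the monomial x^m is the number of proper
   colourings k : V -> nat with k v = c whose colour content is m, i.e.
   #{u | k u = j} = m j for every colour j.  Every such colouring only uses
   colours in the support of m, hence takes values below B. *)
Definition Zv (V : finType) (e : rel V) (v : V) (c : nat) : series :=
  fun m =>
    let B := (\max_(j <- finsupp m) j).+1 in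
    (#|[set k : {ffun V -> 'I_B} |
         [&& [forall u, forall w, e u w ==> (k u != k w)],
             val (k v) == c &
             [forall j : 'I_B, #|[pred u | k u == j]| == m (val j)]]]|%N)%:Z.

From HB Require Import structures.
From mathcomp Require Import all_boot all_order all_algebra.
From mathcomp Require Import finmap.
Import GRing.Theory Num.Theory.
Local Open Scope ring_scope.
Set Implicit Arguments. Unset Strict Implicit. Unset Printing Implicit Defensive.

(* Renaming colours by a permutation s maps the colourings counted by the
   coefficient of m in Z(c) bijectively onto those counted by the coefficient
   of m o s^-1 in Z(s c).  Now fix a monomial p and a colour d absent from p.
   Comparing the coefficients of p x_d^a in Z(d) = sum_i x_d^i F_i forces
     F_a(p) = [p x_d^a] Z(d) - sum_(1 <= i < a) F_i(p x_d^(a-i)),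
   which we take as a recursive definition with d the least colour above the
   support of p.  By strong induction on a and colour invariance of Z, the
   right-hand side does not depend on the fresh colour d, and F_a is
   symmetric; reading the same recursion at p = m / x_c^(m c) gives the
   expansion of Z(c) at every colour c.  Uniqueness is the same comparison of
   coefficients. *)

Definition mbound (m : monomial) : nat := (\max_(j <- finsupp m) j).+1.

Lemma mbound_supp (m : monomial) j : m j != 0%N -> (j < mbound m)%N.
Proof.
move=> mj; have j_supp : j \in finsupp m by rewrite mem_finsupp.
by rewrite ltnS (@leq_bigmax_seq _ _ xpredT id j j_supp).
Qed.

Lemma mbound_out (m : monomial) j : (mbound m <= j)%N -> m j = 0%N.
Proof. by move=> le_bj; apply/eqP; apply: contraTT le_bj => /mbound_supp; rewrite ltnNge. Qed.

Lemma mbound_fresh (m : monomial) : m (mbound m) = 0%N.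
Proof. exact: mbound_out. Qed.

Definition mraise (c k : nat) (m : monomial) : monomial :=
  [fsfun j in (c |` finsupp m)%fset => if j == c then (m j + k)%N else m j | 0%N].

Lemma mraiseE c k m j : mraise c k m j = if j == c then (m j + k)%N else m j.
Proof.
rewrite /mraise fsfunE !inE mem_finsupp.
by case: eqP => //= _; case: ifP => // /negbFE/eqP.
Qed.

Lemma mlowerE c k m j : mlower c k m j = if j == c then (m j - k)%N else m j.
Proof.
rewrite /mlower fsfunE mem_finsupp.
by case: ifP => // /negbFE/eqP ->; case: eqP.
Qed.

Lemma mraiseK c k : cancel (mraise c k) (mlower c k).
Proof. by move=> m; apply/fsfunP => j; rewrite mlowerE mraiseE; case: eqP => // ->; rewrite addnK. Qed.

Lemma mlower0 c : mlower c 0 =1 id.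
Proof. by move=> m; apply/fsfunP => j; rewrite mlowerE subn0; case: eqP. Qed.

Lemma mraise_lower c k (m : monomial) : (k <= m c)%N ->
  mraise c k (mlower c (m c) m) = mlower c (m c - k) m.
Proof.
move=> le_k; apply/fsfunP => j; rewrite mraiseE !mlowerE.
by case: (eqVneq j c) => [->|] //; rewrite subnn add0n subKn.
Qed.

Lemma mdeg_bigord (m : monomial) N : (forall j, m j != 0%N -> (j < N)%N) ->
  mdeg m = (\sum_(j < N) m j)%N.
Proof.
move=> supp_N; rewrite /mdeg -(big_mkord xpredT) /index_iota subn0.
transitivity (\sum_(j <- iota 0 N | j \in finsupp m) m j)%N; last first.
  by rewrite big_mkcond /=; apply: eq_bigr => j _; case: finsuppP.
rewrite -[RHS]big_filter; apply/perm_big/uniq_perm.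
- exact: fset_uniq.
- by rewrite filter_uniq // iota_uniq.
move=> j; rewrite mem_filter mem_iota /= add0n.
by case j_supp: (j \in finsupp m); rewrite // supp_N // -mem_finsupp.
Qed.

Lemma mdeg_raise c k (m : monomial) : mdeg (mraise c k m) = (mdeg m + k)%N.
Proof.
set N := maxn (mbound m) c.+1.
have lt_cN : (c < N)%N by rewrite leq_max ltnSn orbT.
have supp_N j : m j != 0%N -> (j < N)%N by move=> /mbound_supp lt_j; rewrite leq_max lt_j.
rewrite (@mdeg_bigord _ N); last first.
  by move=> j; rewrite mraiseE; case: (eqVneq j c) => [->|_] // /supp_N.
rewrite (mdeg_bigord supp_N).
rewrite (eq_bigr (fun j : 'I_N => m j + (if val j == c then k else 0))%N); last first.
  by move=> j _; rewrite mraiseE; case: ifP; rewrite ?addn0.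
rewrite big_split /=; congr (_ + _)%N.
rewrite (bigD1 (Ordinal lt_cN)) //= eqxx big1 ?addn0 // => j.
by rewrite -(inj_eq val_inj) /= => /negbTE ->.
Qed.

Definition tpermn (c d j : nat) : nat :=
  if j == c then d else if j == d then c else j.

Lemma tpermnK c d : involutive (tpermn c d).
Proof.
move=> j; rewrite /tpermn.
case: (eqVneq j c) => [->|ne_jc]; first by rewrite eqxx; case: eqP.
case: (eqVneq j d) => [->|ne_jd]; first by rewrite eqxx.
by rewrite (negbTE ne_jc) (negbTE ne_jd).
Qed.

Definition perm_invariant (f : series) : Prop :=
  forall s : nat -> nat, bijective s ->
    forall m m' : monomial, (forall j, m' j = m (s j)) -> f m' = f m.

Section Colourings.
Variables (V : finType) (e : rel V) (v : V).

Definition admissible N c (m : monomial) (k : {ffun V -> 'I_N}) : bool :=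
  [&& [forall u, forall w, e u w ==> (k u != k w)], val (k v) == c &
      [forall j : 'I_N, #|[pred u | k u == j]| == m (val j)]].

Definition ncol N c (m : monomial) : nat :=
  #|[set k : {ffun V -> 'I_N} | admissible c m k]|.

Lemma ZvE c m : Zv e v c m = (ncol (mbound m) c m)%:Z.
Proof. by []. Qed.

Lemma admissible_used N c m (k : {ffun V -> 'I_N}) u :
  admissible c m k -> (0 < m (k u))%N.
Proof.
case/and3P=> _ _ /forallP /(_ (k u)) /eqP <-.
by apply/card_gt0P; exists u; rewrite inE.
Qed.

Lemma ncol_recolour_le (m m' : monomial) (s g : nat -> nat) c :
  cancel s g -> cancel g s -> (forall j, m' j = m (s j)) ->
  (ncol (mbound m') c m' <= ncol (mbound m) (s c) m)%N.
Proof.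
move=> sK gK m'E.
pose recol (k : {ffun V -> 'I_(mbound m')}) : {ffun V -> 'I_(mbound m)} :=
  [ffun u => inord (s (k u))].
have recolE k u : admissible c m' k -> val (recol k u) = s (k u).
  move=> adm_k; rewrite ffunE; apply/inordK/mbound_supp.
  by rewrite -m'E -lt0n (admissible_used _ adm_k).
rewrite /ncol -(card_in_imset (f := recol)); last first.
  move=> k1 k2; rewrite !inE => adm1 adm2 eq12; apply/ffunP => u.
  by apply/val_inj/(can_inj sK); rewrite -recolE // -recolE // eq12.
apply/subset_leq_card/subsetP => _ /imsetP [k adm_k ->].
rewrite inE in adm_k; rewrite inE.
have [/forallP proper_k /eqP kv /forallP content_k] := and3P adm_k.
apply/and3P; split.
- apply/forallP => u; apply/forallP => w; apply/implyP => euw.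
  apply: contra (implyP (forallP (proper_k u) w) euw) => /eqP eq_uw.
  by apply/eqP/val_inj/(can_inj sK); rewrite -!recolE // eq_uw.
- by rewrite recolE // kv.
apply/forallP => j.
have preimE : [pred u | recol k u == j] =i [pred u | val (k u) == g j].
  move=> u; rewrite !inE -(inj_eq val_inj) recolE //.
  by apply/eqP/eqP => [<-|->]; rewrite ?sK ?gK.
have -> : m j = m' (g j) by rewrite m'E gK.
rewrite (eq_card preimE).
case: (ltnP (g j) (mbound m')) => [lt_gj|le_gj].
  by rewrite -(eqP (content_k (Ordinal lt_gj))).
rewrite (mbound_out le_gj); apply/eqP/eq_card0 => u; rewrite !inE.
by apply/negbTE; rewrite neq_ltn (leq_trans (ltn_ord _) le_gj).
Qed.

Lemma Zv_recolour (m m' : monomial) (s : nat -> nat) c :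
  bijective s -> (forall j, m' j = m (s j)) -> Zv e v c m' = Zv e v (s c) m.
Proof.
case=> g sK gK m'E; rewrite !ZvE; congr (_ %:Z); apply/anti_leq.
rewrite (ncol_recolour_le c sK gK m'E) /=.
have mE j : m j = m' (g j) by rewrite m'E gK.
by have := ncol_recolour_le (s c) gK sK mE; rewrite sK.
Qed.

Lemma Zv_witness c m : Zv e v c m != 0 ->
  exists k : {ffun V -> 'I_(mbound m)}, admissible c m k.
Proof.
rewrite ZvE /ncol -lt0n => /card_gt0P [k].
by rewrite inE; exists k.
Qed.

Lemma Zv_neq0_colour c m : Zv e v c m != 0 -> (0 < m c)%N.
Proof.
case/Zv_witness => k adm_k; have := admissible_used v adm_k.
by case/and3P: adm_k => _ /eqP ->.
Qed.

Lemma Zv_neq0_mdeg c m : Zv e v c m != 0 -> mdeg m = #|V|.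
Proof.
case/Zv_witness => k /and3P [_ _ /forallP content_k].
rewrite (mdeg_bigord (@mbound_supp m)).
rewrite (eq_bigr (fun j => #|[pred u | k u == j]|)); last first.
  by move=> j _; rewrite (eqP (content_k j)).
rewrite -sum1_card (partition_big k xpredT) //=.
by apply: eq_bigr => j _; rewrite -sum1_card.
Qed.

End Colourings.

Lemma big_ord_widen_vanish (R : nmodType) n K (F : nat -> R) :
  (n <= K)%N -> (forall i, (n <= i)%N -> F i = 0) ->
  \sum_(i < n) F i = \sum_(i < K) F i.
Proof.
move=> le_nK F0; rewrite (big_ord_widen _ _ le_nK) big_mkcond.
by apply: eq_bigr => i _; case: ltnP => // /F0.
Qed.

Section Coefficients.
Variables (V : finType) (e : rel V) (v : V).

Definition Fstep (F : nat -> series) (a : nat) : series := fun p =>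
  Zv e v (mbound p) (mraise (mbound p) a p) -
  \sum_(1 <= i < a) F i (mraise (mbound p) (a - i) p).

(* Course-of-values recursion: [Ftab a i] is [Fcoef i] for every [i <= a]. *)
Fixpoint Ftab (a : nat) : nat -> series :=
  if a is a'.+1 then fun i => if (i <= a')%N then Ftab a' i else Fstep (Ftab a') i
  else fun _ _ => 0.

Definition Fcoef (i : nat) : series := Ftab i i.

Lemma Ftab_stable a i : (i <= a)%N -> Ftab a i = Fcoef i.
Proof.
elim: a => [|a IHa]; first by rewrite leqn0 => /eqP ->.
rewrite leq_eqVlt => /predU1P [-> //|lt_ia] /=.
by rewrite -ltnS lt_ia IHa.
Qed.

Lemma Fcoef0 : Fcoef 0 =1 fun _ => 0.
Proof. by []. Qed.

Lemma Fcoef_rec a : (0 < a)%N -> Fcoef a =1 Fstep Fcoef a.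
Proof.
case: a => // a _ p; rewrite /Fcoef /= ltnn /Fstep; congr (_ - _).
by apply: eq_big_nat => i /andP [_ lt_ia]; rewrite Ftab_stable // -ltnS.
Qed.

Lemma Fcoef_rec_fresh a : (forall b, (b < a)%N -> perm_invariant (Fcoef b)) ->
  (0 < a)%N -> forall (p : monomial) c, p c = 0%N ->
  Fcoef a p = Zv e v c (mraise c a p) - \sum_(1 <= i < a) Fcoef i (mraise c (a - i) p).
Proof.
move=> IHa a_gt0 p c pc0; rewrite Fcoef_rec // /Fstep.
set d := mbound p.
have raise_tperm k j : mraise c k p j = mraise d k p (tpermn c d j).
  rewrite !mraiseE /tpermn.
  case: (eqVneq j c) => [->|ne_jc]; first by rewrite eqxx pc0 mbound_fresh.
  case: (eqVneq j d) => [eq_jd|ne_jd]; last by rewrite (negbTE ne_jd).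
  by rewrite eq_jd in ne_jc *; rewrite eq_sym (negbTE ne_jc) pc0 mbound_fresh.
have tperm_bij : bijective (tpermn c d) by exists (tpermn c d); apply: tpermnK.
congr (_ - _).
  by rewrite (Zv_recolour e v c tperm_bij (raise_tperm a)) /tpermn eqxx.
apply: eq_big_nat => i /andP [_ lt_ia].
by rewrite (IHa i lt_ia _ tperm_bij _ _ (raise_tperm _)).
Qed.

Lemma Fcoef_perm_invariant a : perm_invariant (Fcoef a).
Proof.
elim/ltn_ind: a => a IHa.
have [->|a_gt0] := posnP a; first by move=> s _ p p' _; rewrite !Fcoef0.
move=> s [g sK gK] p p' p'E.
set d := mbound p.
have p'_fresh : p' (g d) = 0%N by rewrite p'E gK mbound_fresh.
have s_bij : bijective s by exists g.
have raise_s k j : mraise (g d) k p' j = mraise d k p (s j).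
  rewrite !mraiseE p'E.
  by have -> : (j == g d) = (s j == d) by apply/eqP/eqP => [->|<-]; rewrite ?gK ?sK.
rewrite (Fcoef_rec_fresh IHa a_gt0 p'_fresh) (Fcoef_rec a_gt0) /Fstep -/d.
congr (_ - _); first by rewrite (Zv_recolour e v (g d) s_bij (raise_s a)) gK.
apply: eq_big_nat => i /andP [_ lt_ia].
by rewrite (IHa i lt_ia _ s_bij _ _ (raise_s _)).
Qed.

Lemma Fcoef_neq0_mdeg a p : Fcoef a p != 0 -> (a + mdeg p)%N = #|V|.
Proof.
elim/ltn_ind: a p => a IHa p.
have [->|a_gt0] := posnP a; first by rewrite Fcoef0 eqxx.
apply: contraNeq => deg_ne; rewrite Fcoef_rec // /Fstep.
have -> : Zv e v (mbound p) (mraise (mbound p) a p) = 0.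
  apply: contraNeq deg_ne => /Zv_neq0_mdeg <-.
  by rewrite mdeg_raise addnC.
rewrite big1_seq ?subrr //= => i; rewrite mem_index_iota => /andP [_ lt_ia].
apply: contraNeq deg_ne => /IHa; rewrite mdeg_raise => /(_ lt_ia) <-.
by rewrite addnCA subnKC ?(ltnW lt_ia) // addnC.
Qed.

Lemma Fcoef_big a p : (#|V| < a)%N -> Fcoef a p = 0.
Proof.
move=> lt_Va; apply: contraTeq lt_Va => /Fcoef_neq0_mdeg <-.
by rewrite -leqNgt leq_addr.
Qed.

Lemma Zv_coef_decomp c m :
  Zv e v c m = \sum_(i < (m c).+1) mulXpow c i (Fcoef i) m.
Proof.
have [mc0|mc_gt0] := posnP (m c).
  case: (eqVneq (Zv e v c m) 0) => [->|/Zv_neq0_colour]; last by rewrite mc0.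
  by rewrite mc0 big_ord1.
set a := m c; set p := mlower c a m.
have pc0 : p c = 0%N by rewrite mlowerE eqxx subnn.
have rec := Fcoef_rec_fresh (fun b _ => Fcoef_perm_invariant b) mc_gt0 pc0.
rewrite mraise_lower // subnn mlower0 in rec.
have sumE : \sum_(1 <= i < a) mulXpow c i (Fcoef i) m =
            \sum_(1 <= i < a) Fcoef i (mraise c (a - i) p).
  apply: eq_big_nat => i /andP [_ lt_ia].
  by rewrite /mulXpow (ltnW lt_ia) mraise_lower ?leq_subr // subKn // ltnW.
rewrite -(big_mkord xpredT (fun i => mulXpow c i (Fcoef i) m)).
rewrite big_nat_recr //= big_ltn //= add0r sumE.
by rewrite /mulXpow leqnn -/p rec addrC subrK.
Qed.

Lemma Zv_expand c m :
  Zv e v c m = \sum_(i < #|V|) mulXpow c i.+1 (Fcoef i.+1) m.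
Proof.
set K := maxn (m c) #|V|.
rewrite Zv_coef_decomp (@big_ord_widen_vanish _ _ K.+1 (fun i => mulXpow c i (Fcoef i) m)); first last.
- by move=> i lt_i; rewrite /mulXpow leqNgt lt_i.
- by rewrite ltnS leq_maxl.
rewrite (@big_ord_widen_vanish _ _ K (fun i => mulXpow c i.+1 (Fcoef i.+1) m)); first last.
- by move=> i le_i; rewrite /mulXpow Fcoef_big ?ltnS //; case: ifP.
- exact: leq_maxr.
by rewrite big_ord_recl add0r; apply: eq_bigr => i _; rewrite lift0.
Qed.

End Coefficients.

Lemma sum_mulXpow_inj n (G F : 'I_n -> series) :
  (forall c m, \sum_(i < n) mulXpow c i.+1 (G i) m = \sum_(i < n) mulXpow c i.+1 (F i) m) ->
  forall i m, G i m = F i m.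
Proof.
move=> GF; suff GF_below k (i : 'I_n) : (i < k)%N -> G i =1 F i.
  by move=> i; apply: (GF_below i.+1).
elim: k i => [|k IHk] i // lt_ik q.
set d := mbound q; have := GF d (mraise d i.+1 q).
rewrite (bigD1 i) // [in RHS](bigD1 i) //=.
have mulXpow_raise j (f : series) : mulXpow d j.+1 f (mraise d i.+1 q) =
    if (j <= i)%N then f (mlower d j.+1 (mraise d i.+1 q)) else 0.
  by rewrite /mulXpow mraiseE eqxx mbound_fresh add0n ltnS.
have restE : \sum_(j < n | j != i) mulXpow d j.+1 (G j) (mraise d i.+1 q) =
              \sum_(j < n | j != i) mulXpow d j.+1 (F j) (mraise d i.+1 q).
  apply: eq_bigr => j ne_ji; rewrite !mulXpow_raise.
  case: (ltngtP j i) => [lt_ji|//|/val_inj eq_ji]; last by rewrite eq_ji eqxx in ne_ji.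
  by apply: IHk; apply: leq_trans lt_ji _.
by rewrite restE !mulXpow_raise leqnn mraiseK => /addIr.
Qed.

Theorem lemma3p4 (V : finType) (e : rel V) (v : V) :
  simple_graph e -> is_tree e ->
  exists F : 'I_#|V| -> series,
    ((forall i, is_symmetric (F i)) /\
     (forall (c : nat) (m : monomial),
        Zv e v c m = \sum_(i < #|V|) mulXpow c i.+1 (F i) m)) /\
    (forall G : 'I_#|V| -> series,
       (forall i, is_symmetric (G i)) ->
       (forall (c : nat) (m : monomial),
          Zv e v c m = \sum_(i < #|V|) mulXpow c i.+1 (G i) m) ->
       forall i m, G i m = F i m).
Proof.
move=> _ _; exists (fun i => Fcoef e v i.+1); split; first split.
- move=> i; split; last exact: Fcoef_perm_invariant.
  by exists #|V| => m /Fcoef_neq0_mdeg <-; apply: leq_addl.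
- exact: Zv_expand.
- move=> G _ ZvG; apply: sum_mulXpow_inj => c m.
  by rewrite -ZvG -Zv_expand.
Qed.
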